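(* Assume (A3) and (A4), and let $\rho\in[0,\epsilon]$. Let $x\in R\mathbb{B}$ and $s\in\partial g(x)$ with $s\ne0$, and set $$x^+=\Pi_{R\mathbb{B}}\Big(x-\frac{[g(x)+\rho]_+}{\|s\|^2}s\Big).$$ Then $$\mathrm{dist}^2(x^+,\mathcal{X}_\rho)\le\Big(1-\frac{\sigma^2}{G_g^2}\Big)\mathrm{dist}^2(x,\mathcal{X}_\rho).$$
   Context: Let $g:\mathbb{R}^d\to\mathbb{R}$ be convex with subdifferential $\partial g(x)$. Let $R>0$ and $\mathbb{B}=\{x\in\mathbb{R}^d:\|x\|\le1\}$, with $\|\cdot\|$ the Euclidean norm. Set $\mathcal{X}=\{x:g(x)\le0\}$ and assume $\mathcal{X}\subseteq R\mathbb{B}$. For $\rho\ge0$ set $\mathcal{X}_\rho=\{x:g(x)\le-\rho\}$. $\Pi_{\mathcal{Y}}$ denotes Euclidean projection onto a closed convex set $\mathcal{Y}$. Write $\mathrm{dist}(z,\mathcal{Y})=\min_{y\in\mathcal{Y}}\|z-y\|$ and $[a]_+=\max(a,0)$. Assumptions: (A3) there is $G_g>0$ with $\|s\|\le G_g$ for all $s\in\partial g(x)$ and all $x\in R\mathbb{B}$; (A4) there are $\sigma,\epsilon>0$ such that $\{x:g(x)=-\epsilon\}$ is nonempty and $\|s\|\ge\sigma$ for all $s\in\partial g(x)$ whenever $g(x)=-\epsilon$. *)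

From HB Require Import structures.
From mathcomp Require Import all_boot all_order all_algebra.
From mathcomp Require Import all_classical all_reals.
Set Implicit Arguments. Unset Strict Implicit. Unset Printing Implicit Defensive.
Import Order.TTheory GRing.Theory Num.Theory.
Local Open Scope ring_scope.
Local Open Scope classical_set_scope.

Section Defs.
Variables (R : realType) (d : nat).
Implicit Types (u v x y s : 'rV[R]_d).

Definition dotv u v : R := \sum_(i < d) u ord0 i * v ord0 i.
Definition enorm u : R := Num.sqrt (dotv u u).

Definition convex_fun (g : 'rV[R]_d -> R) : Prop :=
  forall x y (t : R), 0 <= t -> t <= 1 ->
    g ((1 - t) *: x + t *: y) <= (1 - t) * g x + t * g y.

Definition subgrad (g : 'rV[R]_d -> R) x s : Prop :=
  forall y, g x + dotv s (y - x) <= g y.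

Definition eball (r : R) : set 'rV[R]_d := [set x | enorm x <= r].

Definition sublevel (g : 'rV[R]_d -> R) (c : R) : set 'rV[R]_d := [set x | g x <= c].

Definition is_proj (Y : set 'rV[R]_d) z p : Prop :=
  Y p /\ forall y, Y y -> enorm (z - p) <= enorm (z - y).

Definition edist z (Y : set 'rV[R]_d) : R := inf [set enorm (z - y) | y in Y].

End Defs.

Definition pospart {R : realType} (a : R) : R := Num.max a 0.

(* The step x |-> x - [g x + rho]_+ / |s|^2 s is a Polyak step: for y in X_rho the
   subgradient inequality gives <x - y, s> >= g x + rho, so the step decreases |. - y|^2 by
   [g x + rho]_+^2 / |s|^2 >= [g x + rho]_+^2 / G_g^2, and projecting onto R B, which
   contains X_rho, does not undo this.  It remains to show the error bound
   sigma dist(x, X_rho) <= [g x + rho]_+.  Let u be the point of X_eps nearest to x (it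
   exists because sublevel sets of convex functions are closed).  Then g u = -eps and x - u
   is an outer normal of X_eps at u, which makes lam (x - u) a subgradient at u for some
   lam >= 0; by (A4), sigma |x - u| <= lam |x - u|^2 <= g x + eps.  Convexity along [x, u]
   then gives a point of X_rho at distance at most (g x + rho) / sigma from x. *)

From Pilot Require Import Defs.
From HB Require Import structures.
From mathcomp Require Import all_boot all_order all_algebra.
From mathcomp Require Import all_classical all_reals all_analysis.
From mathcomp Require Import ring lra.
Import Order.TTheory GRing.Theory Num.Theory.
Import numFieldNormedType.Exports.
Set Implicit Arguments. Unset Strict Implicit. Unset Printing Implicit Defensive.
Local Open Scope ring_scope.
(* mathcomp-analysis also defines [edist]; make [Defs.edist] take precedence *)
Import Defs.

Section InnerProduct.
Context {R : realType} {d : nat}.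
Implicit Types (u v w : 'rV[R]_d).

Lemma dotvC u v : dotv u v = dotv v u.
Proof. by apply: eq_bigr => i _; rewrite mulrC. Qed.

Lemma dotvDl u v w : dotv (u + v) w = dotv u w + dotv v w.
Proof. by rewrite /dotv -big_split; apply: eq_bigr => i _; rewrite !mxE mulrDl. Qed.

Lemma dotvZl a u v : dotv (a *: u) v = a * dotv u v.
Proof. by rewrite /dotv mulr_sumr; apply: eq_bigr => i _; rewrite !mxE mulrA. Qed.

Lemma dotvNl u v : dotv (- u) v = - dotv u v.
Proof. by rewrite -scaleN1r dotvZl mulN1r. Qed.

Lemma dotvDr u v w : dotv w (u + v) = dotv w u + dotv w v.
Proof. by rewrite dotvC dotvDl !(dotvC w). Qed.

Lemma dotvZr a u v : dotv v (a *: u) = a * dotv v u.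
Proof. by rewrite dotvC dotvZl dotvC. Qed.

Lemma dotvNr u v : dotv v (- u) = - dotv v u.
Proof. by rewrite dotvC dotvNl dotvC. Qed.

Lemma dotv0r u : dotv u 0 = 0.
Proof. by rewrite /dotv big1 // => i _; rewrite mxE mulr0. Qed.

Lemma dotvv_ge0 u : 0 <= dotv u u.
Proof. by apply: sumr_ge0 => i _; rewrite -expr2 sqr_ge0. Qed.

Lemma dotvv_eq0 u : (dotv u u == 0) = (u == 0).
Proof.
apply/idP/eqP => [|->]; last by rewrite dotv0r.
rewrite psumr_eq0 => [/allP u0|i _]; last by rewrite -expr2 sqr_ge0.
apply/rowP => i; rewrite mxE; apply/eqP.
by have := u0 i (mem_index_enum _); rewrite implyTb mulf_eq0 orbb.
Qed.

Lemma enorm_ge0 u : 0 <= enorm u.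
Proof. exact: sqrtr_ge0. Qed.

Lemma enorm_sq u : enorm u ^+ 2 = dotv u u.
Proof. by rewrite /enorm sqr_sqrtr // dotvv_ge0. Qed.

Lemma enorm_eq0 u : (enorm u == 0) = (u == 0).
Proof. by rewrite -sqrf_eq0 enorm_sq dotvv_eq0. Qed.

Lemma enorm_gt0 u : (0 < enorm u) = (u != 0).
Proof. by rewrite lt_def enorm_eq0 enorm_ge0 andbT. Qed.

Lemma enorm0 : enorm (0 : 'rV[R]_d) = 0.
Proof. by apply/eqP; rewrite enorm_eq0. Qed.

Lemma enormZ a u : enorm (a *: u) = `|a| * enorm u.
Proof.
by rewrite /enorm dotvZl dotvZr mulrA -expr2 sqrtrM ?sqr_ge0 // sqrtr_sqr.
Qed.

Lemma enormN u : enorm (- u) = enorm u.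
Proof. by rewrite -scaleN1r enormZ normrN normr1 mul1r. Qed.

Lemma enormB u v : enorm (u - v) = enorm (v - u).
Proof. by rewrite -enormN opprB. Qed.

Lemma enormD_sq u v :
  enorm (u + v) ^+ 2 = enorm u ^+ 2 + 2 * dotv u v + enorm v ^+ 2.
Proof. rewrite !enorm_sq !dotvDl !dotvDr (dotvC v u); ring. Qed.

Lemma enormB_sq u v :
  enorm (u - v) ^+ 2 = enorm u ^+ 2 - 2 * dotv u v + enorm v ^+ 2.
Proof. by rewrite enormD_sq enormN dotvNr; ring. Qed.

Lemma cauchy_schwarz u v : dotv u v <= enorm u * enorm v.
Proof.
have [->|u0] := eqVneq u 0; first by rewrite dotvC dotv0r enorm0 mul0r.
have [->|v0] := eqVneq v 0; first by rewrite dotv0r enorm0 mulr0.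
set a := enorm u; set b := enorm v.
have a0 : 0 < a by rewrite enorm_gt0.
have b0 : 0 < b by rewrite enorm_gt0.
(* expand 0 <= |b u - a v|^2 where a = |u|, b = |v| *)
have := sqr_ge0 (enorm (b *: u - a *: v)).
rewrite enormB_sq !enormZ dotvZl dotvZr !gtr0_norm // -/a -/b.
have ab0 : 0 < a * b by rewrite mulr_gt0.
nra.
Qed.

Lemma enormD u v : enorm (u + v) <= enorm u + enorm v.
Proof.
rewrite -ler_sqr ?nnegrE ?addr_ge0 ?enorm_ge0 // enormD_sq.
have := cauchy_schwarz u v; nra.
Qed.

End InnerProduct.

Section Projection.
Context {R : realType} {d : nat}.
Implicit Types (C : set 'rV[R]_d) (x y z p : 'rV[R]_d).

Definition convex_set_rV C : Prop :=
  forall x y (t : R), C x -> C y -> 0 <= t -> t <= 1 -> C ((1 - t) *: x + t *: y).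

Lemma convex_comb_shift p y (t : R) : (1 - t) *: p + t *: y = p + t *: (y - p).
Proof. by rewrite scalerBr scalerBl scale1r addrA addrAC. Qed.

Lemma convex_sublevel (g : 'rV[R]_d -> R) c :
  convex_fun g -> convex_set_rV (sublevel g c).
Proof.
move=> gconv x y t gx gy t0 t1; rewrite /sublevel /= in gx gy *.
apply: le_trans (gconv _ _ _ t0 t1) _; nra.
Qed.

Lemma convex_eball r : convex_set_rV (eball r).
Proof.
move=> x y t; rewrite /eball /= => xr yr t0 t1.
apply: le_trans (enormD _ _) _.
rewrite !enormZ (ger0_norm t0) ger0_norm ?subr_ge0 //; nra.
Qed.

Lemma is_proj_obtuse C z p y :
  convex_set_rV C -> is_proj C z p -> C y -> dotv (z - p) (y - p) <= 0.
Proof.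
move=> Cconv [Cp pmin] Cy.
set a := dotv (z - p) (y - p); set b := enorm (y - p) ^+ 2.
have b0 : 0 <= b by exact: sqr_ge0.
rewrite leNgt; apply/negP => a0.
(* moving from p towards y by t = a / (a + b) would get strictly closer to z *)
set t := a / (a + b).
have t0 : 0 < t by rewrite divr_gt0 // ltr_wpDr.
have t1 : t <= 1 by rewrite ler_pdivrMr ?mul1r ?ltr_wpDr // lerDl.
have tab : t * (a + b) = a by rewrite divfK // gt_eqF // ltr_wpDr.
have := pmin _ (Cconv _ _ _ Cp Cy (ltW t0) t1).
rewrite -ler_sqr ?nnegrE ?enorm_ge0 // convex_comb_shift opprD addrA.
rewrite [X in _ <= X]enormB_sq enormZ dotvZr gtr0_norm // exprMn -/a -/b.
nra.
Qed.

Lemma is_proj_closer C z p y :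
  convex_set_rV C -> is_proj C z p -> C y -> enorm (p - y) <= enorm (z - y).
Proof.
move=> Cconv zp Cy; rewrite -ler_sqr ?nnegrE ?enorm_ge0 //.
have obtuse := is_proj_obtuse Cconv zp Cy.
have -> : z - y = (z - p) + (p - y) by rewrite addrA subrK.
rewrite [X in _ <= X]enormD_sq -opprB dotvNr.
have := sqr_ge0 (enorm (z - p)); lra.
Qed.

End Projection.

Section NormComparison.
Context {R : realType} {d : nat}.
Implicit Types (u v : 'rV[R]_d).

Definition l1norm v : R := \sum_i `|v ord0 i|.

Lemma l1norm_ge0 v : 0 <= l1norm v.
Proof. exact: sumr_ge0. Qed.

Lemma le_sum_nneg (F : 'I_d -> R) j : (forall i, 0 <= F i) -> F j <= \sum_i F i.
Proof. by move=> F0; rewrite (bigD1 j) //= lerDl sumr_ge0. Qed.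

Lemma mxnorm_le_enorm v : `|v| <= enorm v.
Proof.
rewrite [`|v|]mx_normrE; apply/bigmax_leP; split => [|[i j] _ /=].
  exact: enorm_ge0.
rewrite (ord1 i) -ler_sqr ?nnegrE ?enorm_ge0 // real_normK ?num_real //.
rewrite enorm_sq expr2 /dotv.
by apply: (le_sum_nneg (F := fun k => v 0 k * v 0 k)) => k; rewrite -expr2 sqr_ge0.
Qed.

Lemma l1norm_le_mxnorm v : l1norm v <= d%:R * `|v|.
Proof.
have entry_le i : `|v ord0 i| <= `|v|.
  by rewrite [`|v|]mx_normrE; apply/bigmax_geP; right; exists (ord0, i).
apply: le_trans (ler_sum _ (fun i _ => entry_le i)) _.
by rewrite sumr_const card_ord mulr_natl.
Qed.

Lemma enorm_le_l1norm v : enorm v <= l1norm v.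
Proof.
rewrite -ler_sqr ?nnegrE ?enorm_ge0 ?l1norm_ge0 //.
rewrite enorm_sq /dotv expr2 /l1norm mulr_suml; apply: ler_sum => i _.
apply: le_trans (ler_norm _) _; rewrite normrM ler_wpM2l //.
by apply: (le_sum_nneg (F := fun k => `|v ord0 k|)).
Qed.

Lemma enorm_lipschitz u v : `|enorm u - enorm v| <= enorm (u - v).
Proof.
rewrite ler_norml; apply/andP; split.
  by have := enormD (v - u) u; rewrite subrK enormB; lra.
by have := enormD (u - v) v; rewrite subrK; lra.
Qed.

Lemma continuous_enorm_sub u : continuous (fun w : 'rV[R]_d => enorm (u - w)).
Proof.
move=> p; apply/(@cvgrPdist_lt _ R^o _ (nbhs p)) => e e0.
have dn0 : 0 < d%:R + 1 :> R by rewrite ltr_wpDl.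
apply/(@nbhs_normP _ 'rV[R]_d); exists (e / (d%:R + 1)) => [|w /= pw]; first exact: divr_gt0.
apply: le_lt_trans (enorm_lipschitz _ _) _.
have -> : u - p - (u - w) = w - p by rewrite opprB addrC addrA subrK.
apply: le_lt_trans (enorm_le_l1norm _) _; apply: le_lt_trans (l1norm_le_mxnorm _) _.
rewrite distrC ltr_pdivlMr // mulrC in pw.
by apply: le_lt_trans pw; rewrite ler_wpM2r // lerDl.
Qed.

End NormComparison.

Section ConvexLowerSemicontinuous.
Context {R : realType} {d : nat}.
Variable g : 'rV[R]_d -> R.
Hypothesis gconv : convex_fun g.
Implicit Types (p h w : 'rV[R]_d).

Lemma convex_le_subconvex_comb (M : R) p (I : eqType) (r : seq I)
    (q : I -> 'rV[R]_d) (lam : I -> R) :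
  g p <= M -> (forall i, g (p + q i) <= M) ->
  (forall i, 0 <= lam i) -> \sum_(i <- r) lam i <= 1 ->
  g (p + \sum_(i <- r) lam i *: q i) <= M.
Proof.
move=> gp gq; elim: r lam => [|i r IH] lam lam0 lam1; first by rewrite big_nil addr0.
rewrite big_cons in lam1; rewrite big_cons; set qs := \sum_(j <- r) lam j *: q j.
have li0 : 0 <= lam i := lam0 i.
have mu0 : 0 <= \sum_(j <- r) lam j by apply: sumr_ge0.
have [l1|l1] := ltP (lam i) 1; last first.
  have -> : lam i = 1 by apply/eqP; rewrite eq_le l1; lra.
  have mu00 : \sum_(j <- r) lam j = 0 by apply/eqP; rewrite eq_le mu0; lra.
  have -> : qs = 0.
    rewrite /qs big1_seq // => j /andP[_ jr].
    by move/eqP: mu00; rewrite psumr_eq0 // => /allP/(_ j jr)/eqP ->; rewrite scale0r.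
  by rewrite addr0 scale1r.
set l := lam i in li0 l1 lam1 *.
(* p + l q_i + qs is a convex combination of p + q_i and p + qs / (1 - l) *)
have l1p : 0 < 1 - l by rewrite subr_gt0.
have gS : g (p + (1 - l)^-1 *: qs) <= M.
  have -> : (1 - l)^-1 *: qs = \sum_(j <- r) (lam j / (1 - l)) *: q j.
    by rewrite /qs scaler_sumr; apply: eq_bigr => j _; rewrite scalerA mulrC.
  apply: IH => [j|]; first by rewrite divr_ge0 // ltW.
  by rewrite -mulr_suml ler_pdivrMr // mul1r; lra.
have -> : p + (l *: q i + qs) = (1 - l) *: (p + (1 - l)^-1 *: qs) + l *: (p + q i).
  by apply/rowP => j; rewrite !mxE; field; rewrite gt_eqF.
have := gconv (p + (1 - l)^-1 *: qs) (p + q i) li0 (ltW l1).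
have := ler_wpM2l (ltW l1p) gS; have := ler_wpM2l li0 (gq i); lra.
Qed.

(* Convex functions on R^d are continuous; lower semicontinuity, which is all that is needed
   for nearest points in sublevel sets to exist, follows from this upper bound on an
   l1-neighbourhood of p. *)
Definition cross_bound p : R :=
  `|g p| + \sum_i (`|g (p + 'e_i)| + `|g (p - 'e_i)|).

Lemma le_cross_bound p : g p <= cross_bound p.
Proof.
apply: le_trans (ler_norm _) _; rewrite lerDl.
by apply: sumr_ge0 => i _; rewrite addr_ge0.
Qed.

Lemma convex_le_cross_bound p h : l1norm h <= 1 -> g (p + h) <= cross_bound p.
Proof.
move=> h1.
have term_le i : `|g (p + 'e_i)| + `|g (p - 'e_i)| <= cross_bound p - `|g p|.
  rewrite /cross_bound [X in _ <= X]addrC addKr.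
  apply: (le_sum_nneg (F := fun k => `|g (p + 'e_k)| + `|g (p - 'e_k)|)) => k.
  by rewrite addr_ge0.
have gp := le_cross_bound p.
(* p + h is a subconvex combination, around p, of the vertices p +- e_i of the cross-polytope *)
pose q i := if 0 <= h ord0 i then ('e_i : 'rV[R]_d) else - 'e_i.
have -> : h = \sum_i `|h ord0 i| *: q i.
  rewrite {1}[h]row_sum_delta; apply: eq_bigr => i _; rewrite /q.
  case: ifP => [hi|/negbT]; first by rewrite ger0_norm.
  by rewrite -ltNge => /ltr0_norm ->; rewrite scalerN scaleNr opprK.
apply: convex_le_subconvex_comb => // i.
have := term_le i; have := normr_ge0 (g p).
have := ler_norm (g (p + 'e_i)); have := ler_norm (g (p - 'e_i)).
have := normr_ge0 (g (p + 'e_i)); have := normr_ge0 (g (p - 'e_i)).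
by rewrite /q; case: ifP => _; lra.
Qed.

Lemma convex_ge_cross_bound p h : l1norm h <= 1 ->
  g p - l1norm h * (cross_bound p - g p) <= g (p + h).
Proof.
move=> h1; set t := l1norm h.
have [t0|tpos] := eqVneq t 0.
  have -> : h = 0.
    apply/rowP => i; rewrite mxE; apply/normr0_eq0.
    by apply: (psumr_eq0P _ t0) => // j _.
  by rewrite t0 mul0r subr0 addr0.
have t0 : 0 < t by rewrite lt_def tpos l1norm_ge0.
(* p is a convex combination of p + h and of the point b of the unit l1-sphere opposite to h *)
set b := p + (- t^-1) *: h.
have gb : g b <= cross_bound p.
  apply: convex_le_cross_bound; rewrite /l1norm.
  under eq_bigr do rewrite mxE normrM normrN.
  by rewrite -mulr_sumr -/(l1norm h) -/t ger0_norm ?invr_ge0 ?(ltW t0) // mulVf.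
set th := t / (1 + t).
have t1 : 0 < 1 + t by lra.
have th0 : 0 <= th by rewrite divr_ge0 // ltW.
have th1 : th <= 1 by rewrite ler_pdivrMr // mul1r lerDr.
have pE : p = (1 - th) *: (p + h) + th *: b.
  by apply/rowP => j; rewrite !mxE /th; field; rewrite tpos gt_eqF.
have := ler_wpM2l (ltW t1) (gconv (p + h) b th0 th1); rewrite -pE.
have -> : (1 + t) * ((1 - th) * g (p + h) + th * g b) = g (p + h) + t * g b.
  by rewrite /th; field; rewrite gt_eqF.
have := ler_wpM2l (ltW t0) gb; nra.
Qed.

Lemma convex_lsc p c : c < g p -> \forall w \near p, c < g w.
Proof.
move=> cp; set D := cross_bound p - g p.
have D0 : 0 <= D by rewrite subr_ge0 le_cross_bound.
set k := (g p - c) / (2 * (D + 1)).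
have kE : k * (2 * (D + 1)) = g p - c by rewrite divfK // mulf_neq0 // gt_eqF // ltr_wpDl.
set del := Num.min 1 k.
have k0 : 0 < k by rewrite divr_gt0 ?subr_gt0 ?mulr_gt0 // ltr_wpDl.
have del0 : 0 < del by rewrite lt_min ltr01 k0.
have del1 : del <= 1 by rewrite ge_min lexx.
have delk : del <= k by rewrite ge_min lexx orbT.
have dn0 : 0 < d%:R + 1 :> R by rewrite ltr_wpDl.
apply/nbhs_normP; exists (del / (d%:R + 1)) => [|w /= pw]; first exact: divr_gt0.
have t_le : l1norm (w - p) <= del.
  apply: le_trans (l1norm_le_mxnorm _) _.
  rewrite distrC ltr_pdivlMr // mulrC in pw.
  by apply: le_trans (ltW pw); rewrite ler_wpM2r // lerDl.
have := convex_ge_cross_bound p (le_trans t_le del1).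
rewrite (addrC p) subrK -/D => gw.
have := ler_wpM2r D0 t_le; have := ler_wpM2r D0 delk.
nra.
Qed.

Lemma closed_sublevel c : closed (sublevel g c).
Proof.
rewrite closedE => p nearNp; rewrite /sublevel /= leNgt; apply/negP => cp.
by apply: nearNp; apply: filterS (convex_lsc cp) => w cw; rewrite /sublevel /= => wc; lra.
Qed.

End ConvexLowerSemicontinuous.

Section SublevelProjection.
Context {R : realType} {d : nat}.
Variable g : 'rV[R]_d -> R.
Hypothesis gconv : convex_fun g.

Lemma sublevel_proj_exists c (x x0 : 'rV[R]_d) :
  g x0 <= c -> exists u, is_proj (sublevel g c) x u.
Proof.
move=> gx0; set B := enorm (x0 - x).
pose A := (sublevel g c `&` [set w | `|w - x| <= B])%classic.
have Ax0 : A x0 by split => //; apply: mxnorm_le_enorm.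
have Acl : closed A.
  apply: closedI; first exact: closed_sublevel.
  apply: (continuous_closedP _).1 (@closed_le _ B) => w.
  exact: cvg_norm (cvgB cvg_id (cvg_cst _)).
have Abd : bounded_set A.
  exists (`|x| + B); split; first exact: num_real.
  move=> M xBM w [_ /= wB]; have := ler_normD (w - x) x; rewrite subrK; lra.
have [u /set_mem [gu _] umin] := EVT_min_rV (ex_intro _ x0 Ax0) (bounded_closed_compact Abd Acl)
  (continuous_subspaceT (continuous_enorm_sub (u := x))).
exists u; split => // y gy.
have [yB|yB] := leP `|y - x| B; first by apply: umin; rewrite inE.
have ux0 : enorm (x - u) <= enorm (x - x0) by apply: umin; rewrite inE.
have : `|y - x| <= enorm (x - y) by rewrite enormB; exact: mxnorm_le_enorm.
by rewrite (enormB x x0) -/B in ux0; lra.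
Qed.

End SublevelProjection.

Section Distance.
Context {R : realType} {d : nat}.
Implicit Types (C : set 'rV[R]_d) (w y : 'rV[R]_d).

Lemma edist_le w C y : C y -> edist w C <= enorm (w - y).
Proof.
move=> Cy; apply: ge_inf; last by exists y.
by exists 0 => _ [y' _ <-]; exact: enorm_ge0.
Qed.

Lemma edist_ge w C (r : R) : (exists y, C y) ->
  (forall y, C y -> r <= enorm (w - y)) -> r <= edist w C.
Proof.
move=> [y0 Cy0] rle; apply: lb_le_inf; first by exists (enorm (w - y0)), y0.
by move=> _ [y Cy <-]; exact: rle.
Qed.

Lemma edist_ge0 w C : (exists y, C y) -> 0 <= edist w C.
Proof. by move=> C0; apply: edist_ge => // y _; exact: enorm_ge0. Qed.

Lemma edist_sq_addr_le C w w' (K : R) : (exists y, C y) -> 0 <= K ->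
  (forall y, C y -> enorm (w - y) ^+ 2 + K <= enorm (w' - y) ^+ 2) ->
  edist w C ^+ 2 + K <= edist w' C ^+ 2.
Proof.
move=> C0 K0 le_wy.
have D0 := edist_ge0 w C0.
set r := Num.sqrt (edist w C ^+ 2 + K).
have r2 : r ^+ 2 = edist w C ^+ 2 + K by rewrite sqr_sqrtr // addr_ge0 ?sqr_ge0.
rewrite -r2 ler_sqr ?nnegrE ?sqrtr_ge0 ?edist_ge0 //.
apply: edist_ge => // y Cy.
rewrite -ler_sqr ?nnegrE ?sqrtr_ge0 ?enorm_ge0 // r2.
have : edist w C ^+ 2 <= enorm (w - y) ^+ 2 by rewrite ler_sqr ?nnegrE ?enorm_ge0 ?edist_le.
have := le_wy y Cy; lra.
Qed.

End Distance.

Lemma pospart_ge0 {R : realType} (a : R) : 0 <= pospart a.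
Proof. by rewrite /pospart le_max lexx orbT. Qed.

Lemma pospart_ge {R : realType} (a : R) : a <= pospart a.
Proof. by rewrite /pospart le_max lexx. Qed.

Lemma pospartM {R : realType} (a : R) : pospart a * a = pospart a ^+ 2.
Proof. by rewrite /pospart expr2; case: leP => // _; rewrite !mul0r. Qed.

Section PolyakStep.
Context {R : realType} {d : nat}.
Variable g : 'rV[R]_d -> R.

Lemma polyak_step_sq c (x s y : 'rV[R]_d) : subgrad g x s -> s != 0 -> g y <= c ->
  enorm (x - (pospart (g x - c) / enorm s ^+ 2) *: s - y) ^+ 2
    <= enorm (x - y) ^+ 2 - pospart (g x - c) ^+ 2 / enorm s ^+ 2.
Proof.
move=> xs s0 gy; set p := pospart (g x - c); set k := p / enorm s ^+ 2.
have s2 : 0 < enorm s ^+ 2 by rewrite exprn_gt0 // enorm_gt0.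
have kE : k * enorm s ^+ 2 = p by rewrite divfK // gt_eqF.
have k0 : 0 <= k by rewrite divr_ge0 ?pospart_ge0 // ltW.
have kp : k * (g x - c) = k * p by rewrite /k /p mulrAC pospartM [RHS]mulrAC expr2.
have slope : g x - c <= dotv (x - y) s.
  by have := xs y; rewrite dotvC -opprB dotvNl; lra.
rewrite (addrAC x) (enormB_sq (x - y)) dotvZr enormZ ger0_norm // exprMn.
have -> : k ^+ 2 * enorm s ^+ 2 = k * p by rewrite expr2 -mulrA kE.
have -> : p ^+ 2 / enorm s ^+ 2 = k * p by rewrite /k mulrAC expr2.
have := ler_wpM2l k0 slope; rewrite kp; lra.
Qed.

End PolyakStep.

Section ErrorBound.
Context {R : realType} {d : nat}.
Variable g : 'rV[R]_d -> R.
Hypothesis gconv : convex_fun g.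
Implicit Types (u x y n : 'rV[R]_d).

Lemma sublevel_segment c x y : g x < c ->
  exists t : R, [/\ 0 < t, t <= 1 & g (x + t *: (y - x)) <= c].
Proof.
move=> gx; have [gy|gy] := leP (g y) c.
  by exists 1; rewrite scale1r addrC subrK.
set t := (c - g x) / (g y - g x).
have gyx : 0 < g y - g x by rewrite subr_gt0 (lt_trans gx).
have t0 : 0 < t by rewrite divr_gt0 // subr_gt0.
have t1 : t <= 1 by rewrite ler_pdivrMr // mul1r lerD2r ltW.
have tE : t * (g y - g x) = c - g x by rewrite divfK // gt_eqF.
exists t; split => //; rewrite -convex_comb_shift.
have := gconv x y (ltW t0) t1; nra.
Qed.

Lemma proj_sublevel_level c x u : c < g x -> is_proj (sublevel g c) x u -> g u = c.
Proof.
move=> cx xu; have [gu _] := xu.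
apply/eqP; rewrite eq_le gu /= leNgt; apply/negP => guc.
have [t [t0 t1 gz]] := sublevel_segment x guc.
have := is_proj_obtuse (convex_sublevel gconv) xu gz.
rewrite addrAC subrr add0r dotvZr -enorm_sq.
have : 0 < enorm (x - u) ^+ 2.
  by rewrite exprn_gt0 // enorm_gt0 subr_eq0; apply: contraTneq cx => ->; rewrite -leNgt.
nra.
Qed.

Section NormalCone.
Variables (c : R) (u n : 'rV[R]_d).
Hypothesis n0 : n != 0.
Hypothesis normal : forall y, g y <= c -> dotv n (y - u) <= 0.

Lemma normal_hyperplane_ge y : dotv n (y - u) = 0 -> c <= g y.
Proof.
move=> ty; rewrite leNgt; apply/negP => gy.
have [t [t0 t1 gz]] := sublevel_segment (y + n) gy.
have := normal gz.
have -> : y + t *: (y + n - y) - u = (y - u) + t *: n.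
  by rewrite (addrC y n) addrK addrAC.
rewrite dotvDr ty dotvZr -enorm_sq add0r.
have : 0 < enorm n ^+ 2 by rewrite exprn_gt0 // enorm_gt0.
nra.
Qed.

Lemma normal_slope_le y y' : dotv n (y - u) < 0 -> 0 < dotv n (y' - u) ->
  dotv n (y - u) * (g y' - c) <= dotv n (y' - u) * (g y - c).
Proof.
set tau := dotv n (y - u); set tau' := dotv n (y' - u) => tau0 tau'0.
(* the segment [y, y'] crosses the hyperplane orthogonal to n through u at parameter th *)
set th := - tau / (tau' - tau).
have den : 0 < tau' - tau by lra.
have thE : th * (tau' - tau) = - tau by rewrite divfK // gt_eqF.
have th0 : 0 <= th by apply: divr_ge0; lra.
have th1 : th <= 1 by rewrite ler_pdivrMr // mul1r; lra.
have cross : c <= g ((1 - th) *: y + th *: y').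
  apply: normal_hyperplane_ge.
  have -> : (1 - th) *: y + th *: y' - u = (1 - th) *: (y - u) + th *: (y' - u).
    by apply/rowP => j; rewrite !mxE; ring.
  by rewrite dotvDr !dotvZr -/tau -/tau'; lra.
have := ler_wpM2l (ltW den) (le_trans cross (gconv y y' th0 th1)).
have -> : (tau' - tau) * ((1 - th) * g y + th * g y') = tau' * g y - tau * g y'.
  by rewrite /th; field; rewrite gt_eqF.
lra.
Qed.

(* The multiplier is the least slope (g y - c) / <n, y - u> over the open half-space
   <n, y - u> > 0; normal_slope_le shows it also works on the opposite half-space. *)
Lemma normal_cone_subgrad : g u = c -> exists2 lam, 0 <= lam & subgrad g u (lam *: n).
Proof.
move=> gu.
pose S := [set (g y - c) / dotv n (y - u) | y in [set y | 0 < dotv n (y - u)]]%classic.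
have S0 : (S !=set0)%classic.
  exists ((g (u + n) - c) / dotv n (u + n - u)), (u + n) => //=.
  by rewrite addrAC subrr add0r -enorm_sq exprn_gt0 // enorm_gt0.
have Slb : lbound S 0.
  move=> _ [y /= ty <-]; apply: divr_ge0 (ltW ty).
  by rewrite subr_ge0 leNgt; apply/negP => /ltW /normal; lra.
exists (inf S) => [|y]; first exact: lb_le_inf S0 Slb.
rewrite gu dotvZl; set tau := dotv n (y - u).
have [tau_gt0|tau_lt0|tau0] := ltgtP 0 tau.
- have : inf S <= (g y - c) / tau by apply: ge_inf; [exists 0 | exists y].
  by rewrite ler_pdivlMr //; lra.
- have : (g y - c) / tau <= inf S.
    apply: (lb_le_inf S0) => _ [y' /= tau'_gt0 <-].
    have := normal_slope_le tau_lt0 tau'_gt0.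
    rewrite -/tau ler_pdivlMr // mulrAC ler_ndivrMr //; lra.
  by rewrite ler_ndivrMr //; lra.
- by rewrite -tau0 mulr0 addr0; apply: normal_hyperplane_ge.
Qed.

End NormalCone.

Lemma sublevel_error_bound (sigma c : R) x x0 :
  (forall u s, g u = c -> subgrad g u s -> sigma <= enorm s) ->
  g x0 <= c -> c < g x ->
  exists2 u, g u <= c & sigma * enorm (x - u) <= g x - c.
Proof.
move=> A4 gx0 cx.
have [u xu] := sublevel_proj_exists gconv x gx0.
have gu := proj_sublevel_level cx xu.
set n := x - u.
have n0 : n != 0 by rewrite subr_eq0; apply: contraTneq cx => ->; rewrite gu ltxx.
have normal y : g y <= c -> dotv n (y - u) <= 0.
  exact: is_proj_obtuse (convex_sublevel gconv) xu.
have [lam lam0 sub] := normal_cone_subgrad n0 normal gu.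
have := A4 _ _ gu sub; rewrite enormZ ger0_norm // => sigma_le.
have := sub x; rewrite gu dotvZl -/n -enorm_sq => gx_ge.
exists u; first by rewrite gu.
have := ler_wpM2r (enorm_ge0 n) sigma_le; rewrite -mulrA -expr2; lra.
Qed.

Lemma edist_sublevel_le (sigma c c' : R) x x0 : 0 <= sigma ->
  (forall u s, g u = c -> subgrad g u s -> sigma <= enorm s) ->
  g x0 <= c -> c <= c' ->
  sigma * edist x (sublevel g c') <= pospart (g x - c').
Proof.
move=> sigma0 A4 gx0 cc'.
have C0 : exists y, sublevel g c' y by exists x0; rewrite /sublevel /=; lra.
have [gx|gx] := leP (g x) c'.
  have := edist_le x (gx : sublevel g c' x); rewrite subrr enorm0 => D_le0.
  have := edist_ge0 x C0; have := pospart_ge0 (g x - c'); nra.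
have [u gu xu] := sublevel_error_bound A4 gx0 (le_lt_trans cc' gx).
(* the point of [x, u] where the convexity bound reaches the level c' *)
set t := (g x - c') / (g x - c).
have gxc : 0 < g x - c by lra.
have t0 : 0 < t by rewrite divr_gt0 // subr_gt0.
have t1 : t <= 1 by rewrite ler_pdivrMr // mul1r; lra.
have tE : t * (g x - c) = g x - c' by rewrite divfK // gt_eqF.
have Cy : sublevel g c' (x + t *: (u - x)).
  rewrite /sublevel /= -convex_comb_shift; have := gconv x u (ltW t0) t1; nra.
have := edist_le x Cy.
rewrite opprD addrA subrr add0r enormN enormZ gtr0_norm // enormB => D_le.
apply: le_trans (pospart_ge _).
have := ler_wpM2l sigma0 D_le; have := ler_wpM2l (ltW t0) xu; lra.
Qed.

End ErrorBound.

Theorem lemma2 (R : realType) (d : nat) (g : 'rV[R]_d -> R) (Rad Gg sigma eps rho : R)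
  (Hconv : convex_fun g)
  (HRad : 0 < Rad)
  (HXsub : forall x, g x <= 0 -> enorm x <= Rad)
  (HGg : 0 < Gg)
  (HA3 : forall x s, enorm x <= Rad -> subgrad g x s -> enorm s <= Gg)
  (Hsigma : 0 < sigma) (Heps : 0 < eps)
  (HA4ne : exists x, g x = - eps)
  (HA4 : forall x s, g x = - eps -> subgrad g x s -> sigma <= enorm s)
  (Hrho0 : 0 <= rho) (Hrho1 : rho <= eps)
  (x s xp : 'rV[R]_d)
  (Hx : enorm x <= Rad) (Hs : subgrad g x s) (Hs0 : s != 0)
  (Hxp : is_proj (eball Rad) (x - (pospart (g x + rho) / enorm s ^+ 2) *: s) xp) :
  edist xp (sublevel g (- rho)) ^+ 2
    <= (1 - sigma ^+ 2 / Gg ^+ 2) * edist x (sublevel g (- rho)) ^+ 2.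
Proof.
set C := sublevel g (- rho); set p := pospart (g x + rho).
have [x0 gx0] := HA4ne.
have C0 : exists y, C y by exists x0; rewrite /C /sublevel /= gx0; lra.
have gx_rho : g x + rho = g x - - rho by rewrite opprK.
have p_le : p ^+ 2 / Gg ^+ 2 <= p ^+ 2 / enorm s ^+ 2.
  rewrite ler_wpM2l ?sqr_ge0 // lef_pV2 ?posrE ?exprn_gt0 ?enorm_gt0 //.
  by rewrite ler_sqr ?nnegrE ?enorm_ge0 ?(ltW HGg) //; exact: HA3 Hx Hs.
have step : edist xp C ^+ 2 + p ^+ 2 / Gg ^+ 2 <= edist x C ^+ 2.
  apply: edist_sq_addr_le => // [|y Cy]; first by rewrite divr_ge0 ?sqr_ge0.
  have yR : eball Rad y by apply: HXsub; rewrite /C /sublevel /= in Cy; lra.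
  have := is_proj_closer (convex_eball (r := Rad)) Hxp yR.
  rewrite -ler_sqr ?nnegrE ?enorm_ge0 //.
  have := polyak_step_sq Hs Hs0 Cy; rewrite -gx_rho -/p; lra.
have error_bound : sigma * edist x C <= p.
  rewrite /p gx_rho; apply: (edist_sublevel_le Hconv x (ltW Hsigma) HA4 (x0 := x0)).
    by rewrite gx0.
  by rewrite lerN2.
have : (sigma * edist x C) ^+ 2 / Gg ^+ 2 <= p ^+ 2 / Gg ^+ 2.
  rewrite ler_wpM2r ?invr_ge0 ?sqr_ge0 // ler_sqr ?nnegrE ?pospart_ge0 //.
  by rewrite mulr_ge0 ?(ltW Hsigma) ?(edist_ge0 x C0).
have -> : (1 - sigma ^+ 2 / Gg ^+ 2) * edist x C ^+ 2
    = edist x C ^+ 2 - (sigma * edist x C) ^+ 2 / Gg ^+ 2 by rewrite exprMn; ring.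
lra.
Qed.
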